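(* Let $d,n\in\mathbb{N}$ and let $g,\tilde g\in\mathbb{R}[\mathbf{x}]$ be polynomials of degree $d$ such that $\mathbf{G}=\{\mathbf{x}\in\mathbb{R}^n:g(\mathbf{x})<1\}$ and $\tilde{\mathbf{G}}=\{\mathbf{x}:\tilde g(\mathbf{x})<1\}$ are bounded, and $g(0)\neq1$, $\tilde g(0)\ne1$. (i) If $\int_{\mathbf{G}}\mathbf{x}^\alpha d\mathbf{x}=\int_{\tilde{\mathbf{G}}}\mathbf{x}^\alpha d\mathbf{x}$ for all $\alpha\in\mathbb{N}^n$ with $|\alpha|\le 3d$, then this equality holds for all $\alpha\in\mathbb{N}^n$; that is, the full moment sequence of Lebesgue measure restricted to $\mathbf{G}$ is determined by its moments of order at most $3d$. (ii) Let moreover $p\in\mathbb{R}[\mathbf{x}]$ have degree at most $t$. If $\int_{\mathbf{G}}\mathbf{x}^\alpha e^{p(\mathbf{x})}d\mathbf{x}=\int_{\tilde{\mathbf{G}}}\mathbf{x}^\alpha e^{p(\mathbf{x})}d\mathbf{x}$ for all $|\alpha|\le 3d+t$, then this equality holds for all $\alpha\in\mathbb{N}^n$.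
   Context: $\mathbf{x}^\alpha=x_1^{\alpha_1}\cdots x_n^{\alpha_n}$, $|\alpha|=\sum_i\alpha_i$; integrals with respect to Lebesgue measure. *)

From HB Require Import structures.
From mathcomp Require Import all_boot all_order all_algebra.
From mathcomp Require Import all_classical all_reals all_analysis.
From mathcomp Require mpoly.
Import (canonicals) mpoly.
Set Implicit Arguments.
Unset Strict Implicit.
Unset Printing Implicit Defensive.
Import Order.TTheory GRing.Theory Num.Theory.
Local Open Scope classical_set_scope.
Local Open Scope ring_scope.

(* Points of R^n are n-tuples of reals; n.-tuple R carries the product
   (Borel) sigma-algebra generated by the coordinate projections. *)

Definition peval (R : realType) (n : nat) (p : mpoly.mpoly n R) (x : n.-tuple R) : R :=
  mpoly.meval (fun i => tnth x i) p.

(* total degree of a polynomial = max of |m| over the monomials m in the support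
   of p (0 for the zero polynomial; only used for nonzero polynomials
   or as an upper bound) *)
Definition tdeg (R : realType) (n : nat) (p : mpoly.mpoly n R) : nat :=
  (\max_(m <- mpoly.msupp p) mpoly.mdeg m)%N.

Definition has_degree (R : realType) (n : nat) (p : mpoly.mpoly n R) (d : nat) : Prop :=
  p != 0 /\ tdeg p = d.

Definition monom (R : realType) (n : nat) (alpha : 'I_n -> nat) (x : n.-tuple R) : R :=
  \prod_(i < n) (tnth x i) ^+ (alpha i).

Definition absm (n : nat) (alpha : 'I_n -> nat) : nat := (\sum_(i < n) alpha i)%N.

Definition sublevel1 (R : realType) (n : nat) (g : mpoly.mpoly n R) : set (n.-tuple R) :=
  [set x | peval g x < 1].

Definition bounded_tuple_set (R : realType) (n : nat) (A : set (n.-tuple R)) : Prop :=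
  exists M : R, forall x, A x -> forall i : 'I_n, `|tnth x i| <= M.

(* mu is the Lebesgue measure on (the Borel sets of) R^n: it gives every
   closed box  prod_i [a_i, b_i]  (a_i <= b_i) its volume prod_i (b_i - a_i).
   By the pi-lambda uniqueness theorem this determines mu on Borel sets. *)
Definition is_lebesgue_measure_n (R : realType) (n : nat)
    (mu : {measure set (n.-tuple R) -> \bar R}) : Prop :=
  forall a b : n.-tuple R, (forall i, tnth a i <= tnth b i) ->
    mu [set x | forall i, tnth a i <= tnth x i <= tnth b i]
    = (\prod_(i < n) (tnth b i - tnth a i))%:E.

From HB Require Import structures.
From mathcomp Require Import all_boot all_order all_algebra.
From mathcomp Require Import all_classical all_reals all_analysis.
From mathcomp Require Import measurable_realfun.
From mathcomp Require mpoly.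
Import (canonicals) mpoly.
Import Order.TTheory GRing.Theory Num.Theory.
Local Open Scope classical_set_scope.
Local Open Scope ring_scope.
Set Implicit Arguments.
Unset Strict Implicit.

(* Write [G = {g < 1}], [H = {gt < 1}] and let
   [w > 0] be the weight ([1] or [exp p]).  As [gt - g] has degree at most [d],
   the equal moments give [int_G (gt - g) w = int_H (gt - g) w]; removing the
   common part [G `&` H] leaves [int_(G\H) (gt - g) w = int_(H\G) (gt - g) w].
   The integrand is positive on [G \ H] (where [g < 1 <= gt]) and negative on
   [H \ G], so both sides vanish and [G \ H] is null; symmetrically so is
   [H \ G], and then every integrand has the same integral over [G] and [H]. *)

Section integral_null_sets.
Context (dT : measure_display) (T : measurableType dT) (R : realType).
Variable mu : {measure set T -> \bar R}.
Local Open Scope ereal_scope.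

Lemma integral_gt0_eq0_null (D : set T) (f : T -> R) :
  measurable D -> measurable_fun D f -> (forall x, D x -> 0 < f x)%R ->
  \int[mu]_(x in D) (f x)%:E = 0 -> mu D = 0.
Proof.
move=> mD mf fD_gt0 intf0.
have intabs0 : \int[mu]_(x in D) `|(f x)%:E| = 0.
  rewrite -intf0; apply: eq_integral => x /[1!inE] Dx.
  by rewrite gee0_abs // lee_fin ltW // fD_gt0.
have mEf := (measurable_EFinP D f).2 mf.
have [N [mN N0 DN]] := (ae_eq_integral_abs mu mD mEf).1 intabs0.
apply/eqP; rewrite eq_le measure_ge0 andbT -N0 le_measure ?inE //.
move=> x Dx; apply: DN => /(_ Dx) [] /eqP.
by rewrite gt_eqF // fD_gt0.
Qed.

Lemma integral_eq_null_setD (A B : set T) (f : T -> \bar R) :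
  measurable A -> measurable B ->
  mu.-integrable A f -> mu.-integrable B f ->
  mu (A `\` B) = 0 -> mu (B `\` A) = 0 ->
  \int[mu]_(x in A) f x = \int[mu]_(x in B) f x.
Proof.
move=> mA mB intA intB AB0 BA0.
rewrite (negligible_integral (measurableD mA mB) mA intA AB0).
rewrite (negligible_integral (measurableD mB mA) mB intB BA0).
by rewrite !setDD setIC.
Qed.

Lemma integral_setI_setD (A B : set T) (f : T -> \bar R) :
  measurable A -> measurable B -> measurable_fun A f ->
  \int[mu]_(x in A) f x = \int[mu]_(x in A `&` B) f x + \int[mu]_(x in A `\` B) f x.
Proof.
move=> mA mB mf; rewrite -{1}(setUIDK A B) integral_setU //.
- exact: measurableI.
- exact: measurableD.
- by rewrite setUIDK.
- by apply/disj_setPS => x [[_ Bx] [_ nBx]].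
Qed.

Lemma setD_null_of_integral_eq (A B : set T) (f : T -> R) :
  measurable A -> measurable B ->
  mu.-integrable A (EFin \o f) -> mu.-integrable B (EFin \o f) ->
  (forall x, (A `\` B) x -> 0 < f x)%R -> (forall x, (B `\` A) x -> f x <= 0)%R ->
  \int[mu]_(x in A) (f x)%:E = \int[mu]_(x in B) (f x)%:E -> mu (A `\` B) = 0.
Proof.
move=> mA mB intA intB fAB_gt0 fBA_le0 intAB.
have mfA := measurable_int mu intA.
have mfB := measurable_int mu intB.
have mAB := measurableD mA mB.
have AB_ge0 : 0 <= \int[mu]_(x in A `\` B) (f x)%:E.
  by apply: integral_ge0 => x /fAB_gt0 /ltW; rewrite lee_fin.
have BA_le0 : \int[mu]_(x in B `\` A) (f x)%:E <= 0.
  rewrite (eq_integral (fun x => - (- f x)%:E)); last by move=> x _; rewrite EFinN oppeK.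
  rewrite integral_ge0N => [|x /fBA_le0]; last by rewrite lee_fin oppr_ge0.
  by rewrite oppe_le0; apply: integral_ge0 => x /fBA_le0; rewrite lee_fin oppr_ge0.
have AB_eq_BA : \int[mu]_(x in A `\` B) (f x)%:E = \int[mu]_(x in B `\` A) (f x)%:E.
  move: intAB; rewrite (integral_setI_setD mA mB mfA) (integral_setI_setD mB mA mfB).
  have AIB_fin : \int[mu]_(x in A `&` B) (f x)%:E \is a fin_num.
    have intAIB := integrableS mA (measurableI _ _ mA mB) (@subIsetl _ A B) intA.
    exact: (integrable_fin_num (measurableI _ _ mA mB) intAIB : _ \is a fin_num).
  rewrite (setIC B A) => /(congr1 (fun z => z - \int[mu]_(x in A `&` B) (f x)%:E)).
  by rewrite !(addeC (\int[mu]_(x in A `&` B) _)) !addeK.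
apply: (integral_gt0_eq0_null mAB _ fAB_gt0).
  by apply: (measurable_funS mA _ ((measurable_EFinP A f).1 mfA)) => x [].
by apply/eqP; rewrite eq_le AB_ge0 andbT AB_eq_BA.
Qed.

End integral_null_sets.

Section locally_bounded_measurable.
Context (R : realType) (n : nat).
Implicit Types (f h : n.-tuple R -> R) (x : n.-tuple R).

Definition locbdd_measurable f :=
  measurable_fun setT f /\
  forall M : R, exists B : R, forall x, (forall i, `|tnth x i| <= M) -> `|f x| <= B.

Lemma locbdd_measurable_cst (c : R) : locbdd_measurable (fun=> c).
Proof. by split; [exact: measurable_cst | move=> M; exists `|c|]. Qed.

Lemma locbdd_measurable_tnth (i : 'I_n) : locbdd_measurable (fun x => tnth x i).
Proof. by split; [exact: measurable_tnth | move=> M; exists M => x; apply]. Qed.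

Lemma locbdd_measurableD f h :
  locbdd_measurable f -> locbdd_measurable h -> locbdd_measurable (fun x => f x + h x).
Proof.
move=> [mf bf] [mh bh]; split; first exact: measurable_funD.
move=> M; have [B1 fB1] := bf M; have [B2 hB2] := bh M.
exists (B1 + B2) => x xM; apply: le_trans (ler_normD _ _) _.
exact: lerD (fB1 _ xM) (hB2 _ xM).
Qed.

Lemma locbdd_measurableM f h :
  locbdd_measurable f -> locbdd_measurable h -> locbdd_measurable (fun x => f x * h x).
Proof.
move=> [mf bf] [mh bh]; split; first exact: measurable_funM.
move=> M; have [B1 fB1] := bf M; have [B2 hB2] := bh M.
exists (B1 * B2) => x xM; rewrite normrM.
by apply: ler_pM => //; [exact: fB1 | exact: hB2].
Qed.

Lemma locbdd_measurable_sum (I : Type) (s : seq I) (F : I -> n.-tuple R -> R) :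
  (forall i, locbdd_measurable (F i)) ->
  locbdd_measurable (fun x => \sum_(i <- s) F i x).
Proof.
move=> lbmF; rewrite -fct_sumE; apply: big_ind => //.
- exact: locbdd_measurable_cst.
- exact: locbdd_measurableD.
Qed.

Lemma locbdd_measurable_prod (I : Type) (s : seq I) (F : I -> n.-tuple R -> R) :
  (forall i, locbdd_measurable (F i)) ->
  locbdd_measurable (fun x => \prod_(i <- s) F i x).
Proof.
move=> lbmF; rewrite -fct_prodE; apply: big_ind => //.
- exact: locbdd_measurable_cst.
- exact: locbdd_measurableM.
Qed.

Lemma locbdd_measurableX f k :
  locbdd_measurable f -> locbdd_measurable (fun x => f x ^+ k).
Proof.
move=> lbmf; have -> : (fun x => f x ^+ k) = fun x => \prod_(i < k) f x.
  by apply: funext => x; rewrite prodr_const card_ord.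
exact: locbdd_measurable_prod.
Qed.

Lemma locbdd_measurable_expR f :
  locbdd_measurable f -> locbdd_measurable (fun x => expR (f x)).
Proof.
move=> [mf bf]; split.
  exact: measurableT_comp (@measurable_expR R) mf.
move=> M; have [B fB] := bf M; exists (expR B) => x xM.
rewrite ger0_norm ?expR_ge0 // ler_expR.
exact: le_trans (ler_norm _) (fB x xM).
Qed.

Lemma locbdd_measurable_monom (alpha : 'I_n -> nat) :
  locbdd_measurable (monom alpha).
Proof.
apply: locbdd_measurable_prod => i.
exact/locbdd_measurableX/locbdd_measurable_tnth.
Qed.

Lemma peval_monomE (p : mpoly.mpoly n R) x :
  peval p x = \sum_(m <- mpoly.msupp p) mpoly.mcoeff m p * monom (mpoly.fun_of_multinom m) x.
Proof. exact: mpoly.mevalE. Qed.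

Lemma locbdd_measurable_peval (p : mpoly.mpoly n R) :
  locbdd_measurable (peval p).
Proof.
rewrite (funext (peval_monomE p)); apply: locbdd_measurable_sum => m.
apply: locbdd_measurableM; [exact: locbdd_measurable_cst | exact: locbdd_measurable_monom].
Qed.

End locally_bounded_measurable.

Section lebesgue_moments.
Context (R : realType) (n : nat) (mu : {measure set (n.-tuple R) -> \bar R}).
Hypothesis mu_lebesgue : is_lebesgue_measure_n mu.
Implicit Types (A : set (n.-tuple R)) (f w : n.-tuple R -> R).

Lemma measurable_box (a b : n.-tuple R) :
  measurable [set x : n.-tuple R | forall i, tnth a i <= tnth x i <= tnth b i].
Proof.
have -> : [set x : n.-tuple R | forall i, tnth a i <= tnth x i <= tnth b i] =
    \bigcap_(i in [set: 'I_n])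
      ((fun x => tnth x i) @^-1` [set` `[tnth a i, tnth b i]]).
  by apply/seteqP; split => x /= xab i => [_|]; rewrite ?in_itv; apply: xab.
apply: fin_bigcap_measurable; first exact: finite_finset.
move=> i _; have := measurable_tnth i measurableT (measurable_itv `[tnth a i, tnth b i]).
by rewrite setTI.
Qed.

Lemma lebesgue_bounded_lty A :
  measurable A -> bounded_tuple_set A -> (mu A < +oo)%E.
Proof.
move=> mA [M AM]; pose a : n.-tuple R := [tuple of nseq n (- `|M|)].
pose b : n.-tuple R := [tuple of nseq n `|M|].
have ab i : tnth a i <= tnth b i by rewrite !tnth_nseq (ge0_cp (normr_ge0 M)).2.
have A_cube : A `<=` [set x : n.-tuple R | forall i, tnth a i <= tnth x i <= tnth b i].
  move=> x Ax i; rewrite !tnth_nseq -ler_norml.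
  exact: le_trans (AM x Ax i) (ler_norm _).
have cube_lty : (mu [set x : n.-tuple R | forall i, (tnth a i <= tnth x i <= tnth b i)%R] < +oo)%E.
  by rewrite mu_lebesgue // ltry.
apply: le_lt_trans (le_measure mu _ _ A_cube) cube_lty; rewrite inE //.
exact: measurable_box.
Qed.

Lemma locbdd_measurable_integrable A f :
  measurable A -> bounded_tuple_set A -> locbdd_measurable f ->
  mu.-integrable A (EFin \o f).
Proof.
move=> mA bA [mf bf]; have [M AM] := bA; have [B fB] := bf M.
apply: (measurable_bounded_integrable mA (lebesgue_bounded_lty mA bA)).
  exact: measurable_funS measurableT (@subsetT _ _) mf.
exists B; split; first exact: num_real.
by move=> K BK x Ax; apply: le_trans (ltW BK); exact: fB (AM x Ax).
Qed.

Lemma integral_peval_mul A w (p : mpoly.mpoly n R) :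
  measurable A -> bounded_tuple_set A -> locbdd_measurable w ->
  (\int[mu]_(x in A) (peval p x * w x)%:E =
   \sum_(m <- mpoly.msupp p)
     (mpoly.mcoeff m p)%:E * \int[mu]_(x in A) (monom (mpoly.fun_of_multinom m) x * w x)%:E)%E.
Proof.
move=> mA bA lbmw.
under eq_integral do rewrite peval_monomE big_distrl /= -sumEFin.
rewrite integral_sum //; last first.
  move=> m; apply: locbdd_measurable_integrable => //.
  apply: locbdd_measurableM => //; apply: locbdd_measurableM.
  - exact: locbdd_measurable_cst.
  - exact: locbdd_measurable_monom.
apply: eq_bigr => m _; under eq_integral do rewrite -mulrA EFinM.
rewrite integralZl //; apply: locbdd_measurable_integrable => //.
by apply: locbdd_measurableM => //; exact: locbdd_measurable_monom.
Qed.

Lemma moments_peval_eq A B w (p : mpoly.mpoly n R) d :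
  measurable A -> measurable B -> bounded_tuple_set A -> bounded_tuple_set B ->
  locbdd_measurable w -> (tdeg p <= d)%N ->
  (forall alpha : 'I_n -> nat, (absm alpha <= d)%N ->
     (\int[mu]_(x in A) (monom alpha x * w x)%:E
      = \int[mu]_(x in B) (monom alpha x * w x)%:E)%E) ->
  (\int[mu]_(x in A) (peval p x * w x)%:E
   = \int[mu]_(x in B) (peval p x * w x)%:E)%E.
Proof.
move=> mA mB bA bB lbmw degp momAB.
rewrite !integral_peval_mul //; apply: eq_big_seq => m m_supp.
congr (_ * _)%E; apply: momAB; rewrite /absm -mpoly.mdegE.
exact: leq_trans (leq_bigmax_seq _ m_supp _) degp.
Qed.

Lemma measurable_sublevel1 (g : mpoly.mpoly n R) : measurable (sublevel1 g).
Proof.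
have := (locbdd_measurable_peval g).1 measurableT _ (measurable_itv `]-oo, 1[).
by rewrite setTI; congr measurable; apply/seteqP; split => x /=; rewrite in_itv.
Qed.

Section sublevel_sets.
Variables (g gt : mpoly.mpoly n R) (w : n.-tuple R -> R) (d : nat).
Hypotheses (deg_g : (tdeg g <= d)%N) (deg_gt : (tdeg gt <= d)%N).
Hypotheses (bdd_g : bounded_tuple_set (sublevel1 g)).
Hypotheses (bdd_gt : bounded_tuple_set (sublevel1 gt)).
Hypotheses (lbm_w : locbdd_measurable w) (w_gt0 : forall x, 0 < w x).
Hypothesis moments_eq : forall alpha : 'I_n -> nat, (absm alpha <= d)%N ->
  (\int[mu]_(x in sublevel1 g) (monom alpha x * w x)%:E
   = \int[mu]_(x in sublevel1 gt) (monom alpha x * w x)%:E)%E.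

Lemma sublevel1_setD_null :
  mu (sublevel1 g `\` sublevel1 gt) = 0%E.
Proof.
have [mG mH] := (measurable_sublevel1 g, measurable_sublevel1 gt).
have lbm_pw (p : mpoly.mpoly n R) : locbdd_measurable (fun x => peval p x * w x).
  by apply: locbdd_measurableM => //; exact: locbdd_measurable_peval.
pose f x := peval (gt - g) x * w x.
have lbm_f : locbdd_measurable f := lbm_pw (gt - g).
have fE x : f x = (peval gt x - peval g x) * w x by rewrite /f /peval mpoly.mevalB.
have int_f A : measurable A -> bounded_tuple_set A ->
    (\int[mu]_(x in A) (f x)%:E = \int[mu]_(x in A) (peval gt x * w x)%:E
                                 - \int[mu]_(x in A) (peval g x * w x)%:E)%E.
  move=> mA bA; rewrite -integralB_EFin //; last 2 first.
  - exact: locbdd_measurable_integrable.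
  - exact: locbdd_measurable_integrable.
  by apply: eq_integral => x _; rewrite fE mulrBl EFinB.
apply: (setD_null_of_integral_eq (f := f) mG mH).
- exact: locbdd_measurable_integrable.
- exact: locbdd_measurable_integrable.
- move=> x [Gx /negP]; rewrite -leNgt => Hx; rewrite fE mulr_gt0 // subr_gt0.
  exact: lt_le_trans Gx Hx.
- move=> x [Hx /negP]; rewrite -leNgt => Gx; rewrite fE.
  by apply: mulr_le0_ge0; rewrite ?subr_le0 ltW // (lt_le_trans Hx Gx).
- rewrite !int_f //.
  by rewrite (moments_peval_eq mG mH bdd_g bdd_gt lbm_w deg_g moments_eq)
             (moments_peval_eq mG mH bdd_g bdd_gt lbm_w deg_gt moments_eq).
Qed.

End sublevel_sets.

Lemma sublevel1_moments_eq (g gt : mpoly.mpoly n R) w d :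
  (tdeg g <= d)%N -> (tdeg gt <= d)%N ->
  bounded_tuple_set (sublevel1 g) -> bounded_tuple_set (sublevel1 gt) ->
  locbdd_measurable w -> (forall x, 0 < w x) ->
  (forall alpha : 'I_n -> nat, (absm alpha <= d)%N ->
     (\int[mu]_(x in sublevel1 g) (monom alpha x * w x)%:E
      = \int[mu]_(x in sublevel1 gt) (monom alpha x * w x)%:E)%E) ->
  forall alpha : 'I_n -> nat,
    (\int[mu]_(x in sublevel1 g) (monom alpha x * w x)%:E
     = \int[mu]_(x in sublevel1 gt) (monom alpha x * w x)%:E)%E.
Proof.
move=> deg_g deg_gt bdd_g bdd_gt lbm_w w_gt0 moments_eq alpha.
have lbm_monom_w : locbdd_measurable (fun x => monom alpha x * w x).
  by apply: locbdd_measurableM => //; exact: locbdd_measurable_monom.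
apply: integral_eq_null_setD.
- exact: measurable_sublevel1.
- exact: measurable_sublevel1.
- exact: locbdd_measurable_integrable (measurable_sublevel1 _) bdd_g lbm_monom_w.
- exact: locbdd_measurable_integrable (measurable_sublevel1 _) bdd_gt lbm_monom_w.
- exact: sublevel1_setD_null moments_eq.
- apply: sublevel1_setD_null deg_gt deg_g bdd_gt bdd_g lbm_w w_gt0 _.
  by move=> beta /moments_eq.
Qed.

End lebesgue_moments.

Theorem theorem2 (R : realType) (d n : nat)
    (mu : {measure set (n.-tuple R) -> \bar R})
    (g gt : mpoly.mpoly n R) :
  is_lebesgue_measure_n mu ->
  has_degree g d -> has_degree gt d ->
  bounded_tuple_set (sublevel1 g) -> bounded_tuple_set (sublevel1 gt) ->
  peval g [tuple of nseq n 0] != 1 -> peval gt [tuple of nseq n 0] != 1 ->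
  (* (i) *)
  ((forall alpha : 'I_n -> nat, (absm alpha <= 3 * d)%N ->
      (\int[mu]_(x in sublevel1 g) (monom alpha x)%:E
       = \int[mu]_(x in sublevel1 gt) (monom alpha x)%:E)%E) ->
   forall alpha : 'I_n -> nat,
      (\int[mu]_(x in sublevel1 g) (monom alpha x)%:E
       = \int[mu]_(x in sublevel1 gt) (monom alpha x)%:E)%E)
  /\
  (* (ii) *)
  (forall (t : nat) (p : mpoly.mpoly n R), (tdeg p <= t)%N ->
   (forall alpha : 'I_n -> nat, (absm alpha <= 3 * d + t)%N ->
      (\int[mu]_(x in sublevel1 g) (monom alpha x * expR (peval p x))%:E
       = \int[mu]_(x in sublevel1 gt) (monom alpha x * expR (peval p x))%:E)%E) ->
   forall alpha : 'I_n -> nat,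
      (\int[mu]_(x in sublevel1 g) (monom alpha x * expR (peval p x))%:E
       = \int[mu]_(x in sublevel1 gt) (monom alpha x * expR (peval p x))%:E)%E).
Proof.
move=> mu_lebesgue [_ deg_g] [_ deg_gt] bdd_g bdd_gt _ _.
have deg_g_le : (tdeg g <= d)%N by rewrite deg_g.
have deg_gt_le : (tdeg gt <= d)%N by rewrite deg_gt.
have d_le_3d : (d <= 3 * d)%N by rewrite leq_pmull.
have := sublevel1_moments_eq mu_lebesgue deg_g_le deg_gt_le bdd_g bdd_gt.
move=> moments_eq; split.
  move=> moments_le_3d alpha.
  under eq_integral do rewrite -[monom _ _]mulr1.
  under [RHS]eq_integral do rewrite -[monom _ _]mulr1.
  apply: (moments_eq (fun=> 1)) => [|x|beta le_beta_d]; first exact: locbdd_measurable_cst.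
    exact: ltr01.
  under eq_integral do rewrite mulr1; under [RHS]eq_integral do rewrite mulr1.
  exact/moments_le_3d/(leq_trans le_beta_d).
move=> t p _ moments_le_3dt.
apply: (moments_eq _ (locbdd_measurable_expR (locbdd_measurable_peval p))).
  by move=> x; exact: expR_gt0.
move=> beta le_beta_d; apply: moments_le_3dt.
exact: leq_trans le_beta_d (leq_trans d_le_3d (leq_addr _ _)).
Qed.
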